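(* Let $H_m,H_{el}$ be finite groups with an action $(h,g)\mapsto h\cdot g$ of $H_{el}$ on $H_m$ satisfying $h\cdot(gg')=(h\cdot g)(h\cdot g')$, and let $\mathcal{A}=F(H_m)\times\mathbb{C}H_{el}$ be the modified quantum double. Let $\Pi^A_\alpha$ be the irreducible representation of $\mathcal{A}$ associated with an $H_{el}$-orbit $A\subset H_m$ with preferred element $g_A$ and an irreducible representation $\alpha$ of $N_A=\{h\in H_{el}:h\cdot g_A=g_A\}$, and let $|\phi_r\rangle$ be a vector in its carrier space. Define $\mathcal{T}_r=\{a\in\mathcal{A}:(\mathrm{id}\otimes\Pi^A_\alpha)\Delta(a)(1\otimes|\phi_r\rangle)=a\otimes|\phi_r\rangle\}$. If $H_m$ is abelian, or if $g_A$ lies in the center of $H_m$ and $h\cdot g_A=g_A$ for all $h\in H_{el}$, then $\mathcal{T}_r$ is a Hopf subalgebra of $\mathcal{A}$.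
   Context: Modified quantum double: as a vector space $F(H_m)\otimes\mathbb{C}H_{el}$ with basis $P_gh$ ($g\in H_m$, $h\in H_{el}$), identified with $F(H_m\times H_{el})$ via $P_gh\leftrightarrow\delta_g\otimes\delta_h$. Structure: $P_ghP_{g'}h'=\delta_{g,h\cdot g'}P_ghh'$, $\Delta(P_gh)=\sum_{g'\in H_m}P_{g'}h\otimes P_{g'^{-1}g}h$, $\varepsilon(P_gh)=\delta_{g,e}$, $S(P_gh)=P_{h^{-1}\cdot g^{-1}}h^{-1}$. The carrier space of $\Pi^A_\alpha$ is $\{|\phi\rangle:H_{el}\to V_\alpha \mid |\phi(xn)\rangle=\alpha(n^{-1})|\phi(x)\rangle\ \forall n\in N_A\}$, with action $(\Pi^A_\alpha(f)\phi)(x)=\sum_{z\in H_{el}}f(x\cdot g_A,z)\,|\phi(z^{-1}x)\rangle$ for $f\in F(H_m\times H_{el})$. A Hopf subalgebra is a subalgebra containing $1$, closed under $\Delta$ (into its tensor square) and under $S$. *)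

From HB Require Import structures.
From mathcomp Require Import all_boot all_order all_algebra all_fingroup.
From mathcomp Require Import center mxrepresentation.
Set Implicit Arguments. Unset Strict Implicit. Unset Printing Implicit Defensive.
Import GRing.Theory.
Local Open Scope ring_scope.

(* Modified quantum double A = F(H_m) (x) C H_el, identified with
   F(H_m x H_el) via P_g h <-> delta_(g,h).  Here H_m, H_el are the
   (whole) finite groups gM, gE and act h g = h . g. *)
Section ModifiedQuantumDouble.
Variables (C : fieldType) (gM gE : finGroupType) (act : gE -> gM -> gM).

Local Notation QD := ({ffun gM * gE -> C}).
Local Notation QD2 := ({ffun (gM * gE) * (gM * gE) -> C}).

(* (P_g h)(P_g' h') = delta_(g, h.g') P_g (h h'), extended bilinearly *)
Definition qd_mul (f1 f2 : QD) : QD :=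
  [ffun x => \sum_(h : gE) f1 (x.1, h) * f2 (act h^-1 x.1, h^-1 * x.2)%g].

Definition qd_one : QD := [ffun x => ((x.2 == 1%g) : nat)%:R].

(* Delta(P_g h) = sum_g' P_g' h (x) P_(g'^-1 g) h *)
Definition qd_Delta (f : QD) : QD2 :=
  [ffun p => if p.1.2 == p.2.2 then f ((p.1.1 * p.2.1)%g, p.1.2) else 0].

(* S(P_g h) = P_(h^-1 . g^-1) h^-1, extended linearly *)
Definition qd_antipode (f : QD) : QD :=
  [ffun x => f ((act x.2^-1 x.1)^-1, x.2^-1)%g].

Definition qd_tensor (a b : QD) : QD2 := [ffun p => a p.1 * b p.2].

Definition in_tensor_square (T : QD -> Prop) (F : QD2) : Prop :=
  exists s : seq (QD * QD),
    (forall p, p \in s -> T p.1 /\ T p.2) /\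
    F = \sum_(p <- s) qd_tensor p.1 p.2.

Definition Hopf_subalgebra (T : QD -> Prop) : Prop :=
  T 0 /\
  (forall a b, T a -> T b -> T (a + b)) /\
  (forall (c : C) a, T a -> T [ffun x => c * a x]) /\
  T qd_one /\
  (forall a b, T a -> T b -> T (qd_mul a b)) /\
  (forall a, T a -> in_tensor_square T (qd_Delta a)) /\
  (forall a, T a -> T (qd_antipode a)).

(* Representation Pi^A_alpha.  alpha is given by a MathComp (row-vector)
   representation rho of N_A on 'rV_n; the paper's alpha(k) v corresponds
   to v *m rho k^-1, so alpha(k^-1)|phi(x)> = phi(x) *m rho k. *)
Variables (gA : gM) (NA : {group gE}) (n : nat) (rho : mx_representation C NA n).

Definition in_carrier (phi : {ffun gE -> 'rV[C]_n}) : Prop :=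
  forall (x k : gE), k \in NA -> phi (x * k)%g = phi x *m rho k.

Definition Pi (f : QD) (phi : {ffun gE -> 'rV[C]_n}) : {ffun gE -> 'rV[C]_n} :=
  [ffun x => \sum_(z : gE) f (act x gA, z) *: phi (z^-1 * x)%g].

(* T_r = {a | (id (x) Pi) Delta(a) (1 (x) phi) = a (x) phi}; elements of
   A (x) V are written as functions gM * gE -> V in the basis P_g h of A. *)
Definition Tr (phi : {ffun gE -> 'rV[C]_n}) (a : QD) : Prop :=
  forall y : gM * gE, Pi [ffun z => qd_Delta a (y, z)] phi = a y *: phi.

End ModifiedQuantumDouble.

From HB Require Import structures.
From mathcomp Require Import all_boot all_order all_algebra all_fingroup.
From mathcomp Require Import center mxrepresentation.
Set Implicit Arguments. Unset Strict Implicit. Unset Printing Implicit Defensive.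
Import GRing.Theory.
Local Open Scope ring_scope.

(* Unfolding Delta and Pi, a lies in T_r iff
     a(g (x . g_A), h) phi(h^-1 x) = a(g, h) phi(x)   for all g, h, x,
   a linear condition satisfied by 1 and, since H_el acts by automorphisms,
   stable under products.  For a in T_r every slice z |-> Delta(a)(y, z)
   satisfies it again, so Delta(a) lies in A (x) T_r.  Both hypotheses make
   every x . g_A central, which gives stability under S and puts the slices
   y |-> Delta(a)(y, z) in T_r too, so Delta(a) also lies in T_r (x) A.
   Such an element is fixed by (projection onto T_r) (x) id, hence lies in
   T_r (x) T_r. *)

Section TensorSquare.
Variables (C : fieldType) (gM gE : finGroupType).
Variable U : {vspace {ffun gM * gE -> C^o}}.

Local Notation QD := {ffun gM * gE -> C}.
Local Notation V := {ffun gM * gE -> C^o}.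
Local Notation QD2 := {ffun (gM * gE) * (gM * gE) -> C}.

Definition qd_delta (q : gM * gE) : V := [ffun p => (p == q)%:R].

Lemma ffun_sum_delta (f : V) : f = \sum_q f q *: qd_delta q.
Proof.
apply/ffunP => p; rewrite sum_ffunE (bigD1 p) //= big1 => [|q /negbTE nqp].
  by rewrite !ffunE eqxx addr0 -[RHS]/(f p * 1) mulr1.
by rewrite !ffunE eq_sym nqp -[LHS]/(f q * 0) mulr0.
Qed.

Lemma in_tensor_square_slices (F : QD2) :
    (forall y, ([ffun z => F (y, z)] : V) \in U) ->
    (forall z, ([ffun y => F (y, z)] : V) \in U) ->
  in_tensor_square (fun a : QD => (a : V) \in U) F.
Proof.
move=> Urow Ucol.
exists [seq (projv U (qd_delta q) : QD, [ffun z => F (q, z)]) | q <- enum predT].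
split=> [p /mapP[q _ ->] /=|]; first by rewrite memv_proj Urow.
apply/ffunP => -[y z]; rewrite big_map big_enum sum_ffunE.
have -> : F (y, z) = projv U [ffun u => F (u, z)] y.
  by rewrite projv_id ?ffunE.
rewrite [in LHS](ffun_sum_delta ([ffun u => F (u, z)] : V)) linear_sum sum_ffunE.
by apply: eq_bigr => q _; rewrite linearZ !ffunE /= mulrC.
Qed.

End TensorSquare.

Section StabilizerAlgebra.
Variables (C : fieldType) (gM gE : finGroupType) (act : gE -> gM -> gM).
Variables (gA : gM) (n : nat) (phi : {ffun gE -> 'rV[C]_n}).

Local Notation QD := {ffun gM * gE -> C}.
Local Notation V := {ffun gM * gE -> C^o}.
Local Notation T := (Tr act gA phi).

Lemma Pi_Delta_slice (a : QD) y :
  Pi act gA [ffun z => qd_Delta a (y, z)] phi =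
  [ffun x => a (y.1 * act x gA, y.2)%g *: phi (y.2^-1 * x)%g].
Proof.
apply/ffunP => x; rewrite !ffunE (bigD1 y.2) //= !ffunE /= eqxx big1 ?addr0 //.
by move=> z /negbTE; rewrite !ffunE /= eq_sym => ->; rewrite scale0r.
Qed.

Lemma TrP (a : QD) : T a <-> forall g h x,
  a (g * act x gA, h)%g *: phi (h^-1 * x)%g = a (g, h) *: phi x.
Proof.
split=> [Ta g h x | Ta [g h]].
  by move/ffunP/(_ x): (Ta (g, h)); rewrite Pi_Delta_slice !ffunE.
by rewrite Pi_Delta_slice; apply/ffunP => x; rewrite !ffunE Ta.
Qed.

Definition Tr_defect (a : V) : {ffun (gM * gE) * gE -> 'rV[C]_n} :=
  [ffun p => a (p.1.1 * act p.2 gA, p.1.2)%g *: phi (p.1.2^-1 * p.2)%g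
             - a p.1 *: phi p.2].

Lemma Tr_defect_is_linear : linear Tr_defect.
Proof.
move=> c a b; apply/ffunP => p; rewrite !ffunE.
by rewrite !scalerDl -!scalerA scalerBr opprD addrACA.
Qed.

HB.instance Definition _ :=
  GRing.isLinear.Build C V _ *:%R Tr_defect Tr_defect_is_linear.

Definition Tr_space : {vspace V} := lker (linfun Tr_defect).

Lemma mem_Tr_space (a : QD) : (a : V) \in Tr_space <-> T a.
Proof.
rewrite memv_ker lfunE; split=> [/eqP/ffunP Ta | /TrP Ta].
  apply/TrP => g h x; move: (Ta (g, h, x)).
  by rewrite !ffunE => /eqP; rewrite subr_eq0 => /eqP.
by apply/eqP/ffunP => -[[g h] x]; rewrite !ffunE /= Ta subrr.
Qed.

Lemma Tr_one : T (qd_one C gM gE).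
Proof.
apply/TrP => g h x; rewrite !ffunE /=.
by case: eqP => [->|_]; rewrite ?invg1 ?mul1g // !scale0r.
Qed.

Lemma Tr_Delta_right (a : QD) y : T a -> T [ffun z => qd_Delta a (y, z)].
Proof.
move/TrP=> Ta; apply/TrP => g h x; rewrite !ffunE /=.
by case: eqP => [<-|_]; rewrite ?mulgA ?Ta // !scale0r.
Qed.

Hypothesis actM : forall h h' g, act (h * h')%g g = act h (act h' g).
Hypothesis act_morph : forall h g g', act h (g * g')%g = (act h g * act h g')%g.

Lemma Tr_mul (a b : QD) : T a -> T b -> T (qd_mul act a b).
Proof.
move=> /TrP Ta /TrP Tb; apply/TrP => g h x.
rewrite !ffunE /= !scaler_suml; apply: eq_bigr => k _.
have shift : ((k^-1 * h)^-1 * (k^-1 * x) = h^-1 * x)%g.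
  by rewrite invMg invgK -mulgA mulKVg.
rewrite act_morph -actM -shift -[LHS]scalerA Tb.
by rewrite -scalerA scalerA [X in X *: _ = _]mulrC -scalerA Ta !scalerA mulrC.
Qed.

Hypothesis orbit_central : forall x g, commute (act x gA) g.

Lemma Tr_antipode (a : QD) : T a -> T (qd_antipode act a).
Proof.
move/TrP=> Ta; apply/TrP => g h x.
rewrite !ffunE /= act_morph -actM.
set u := act h^-1 g; set w := act (h^-1 * x)%g gA.
rewrite -(orbit_central (h^-1 * x)%g u) invMg.
rewrite -(Ta (u^-1 * w^-1)%g h^-1%g (h^-1 * x)%g).
by rewrite -mulgA mulVg mulg1 invgK mulKVg.
Qed.

Lemma Tr_Delta_left (a : QD) z : T a -> T [ffun y => qd_Delta a (y, z)].
Proof.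
move/TrP=> Ta; apply/TrP => g h x; rewrite !ffunE /=.
case: eqP => [->|_]; last by rewrite !scale0r.
by rewrite -mulgA (orbit_central x z.1) mulgA Ta.
Qed.

Lemma Tr_Hopf_subalgebra : Hopf_subalgebra act T.
Proof.
split; first by apply/mem_Tr_space; rewrite mem0v.
split.
  move=> a b /mem_Tr_space Ta /mem_Tr_space Tb.
  by apply/mem_Tr_space; rewrite memvD.
split.
  move=> c a /mem_Tr_space Ta; apply/mem_Tr_space.
  suff -> : [ffun x => c * a x] = c *: (a : V) by rewrite memvZ.
  by apply/ffunP => x; rewrite !ffunE.
split; first exact: Tr_one.
split; first exact: Tr_mul.
split; last exact: Tr_antipode.
move=> a Ta; have [] := in_tensor_square_slices (U := Tr_space) (F := qd_Delta a).
- by move=> y; apply/mem_Tr_space/Tr_Delta_right.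
- by move=> z; apply/mem_Tr_space/Tr_Delta_left.
by move=> s [sT ->]; exists s; split=> // p /sT[]; split; apply/mem_Tr_space.
Qed.

End StabilizerAlgebra.

Theorem mainTheorem5 (C : numClosedFieldType) (gM gE : finGroupType)
    (act : gE -> gM -> gM)
    (act1 : forall g, act 1%g g = g)
    (actM : forall h h' g, act (h * h')%g g = act h (act h' g))
    (act_morph : forall h g g', act h (g * g')%g = (act h g * act h g')%g)
    (gA : gM) (NA : {group gE})
    (hNA : NA :=: [set h | act h gA == gA])
    (n : nat) (rho : mx_representation C NA n) (rho_irr : mx_irreducible rho)
    (phi : {ffun gE -> 'rV[C]_n}) (phi_car : in_carrier rho phi) :
  abelian [set: gM] \/ (gA \in ('Z([set: gM]))%g /\ forall h, act h gA = gA) ->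
  Hopf_subalgebra act (Tr act gA phi).
Proof.
move=> hyp; apply: Tr_Hopf_subalgebra => // x g.
case: hyp => [/centsP gM_abelian | [/centerP[_ gA_central] gA_fixed]].
  by apply: gM_abelian; rewrite inE.
by rewrite gA_fixed; apply: gA_central; rewrite inE.
Qed.
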